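(* Let $k$ be a positive integer and let $G$ be a finite graph whose vertex set is partitioned into cliques $V_1,\ldots,V_r$. Suppose that for every $i \in \{1,\ldots,r\}$ and every $v \in V_i$, the number of neighbours of $v$ outside $V_i$ is at most $\min\{k, |V_i|-k\}$. Then $G$ contains a stable set of size $r$.
   Context: A stable set is a set of pairwise non-adjacent vertices. *)

From mathcomp Require Import all_boot.
Set Implicit Arguments. Unset Strict Implicit. Unset Printing Implicit Defensive.

Definition simple_graph (T : finType) (e : rel T) : Prop :=
  symmetric e /\ irreflexive e.

Definition is_clique (T : finType) (e : rel T) (A : {set T}) : Prop :=
  forall x y, x \in A -> y \in A -> x != y -> e x y.

Definition is_stable (T : finType) (e : rel T) (S : {set T}) : Prop :=
  forall x y, x \in S -> y \in S -> ~~ e x y.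

Definition nbhd (T : finType) (e : rel T) (v : T) : {set T} := [set u | e v u].

From mathcomp Require Import all_boot zify.
Set Implicit Arguments. Unset Strict Implicit. Unset Printing Implicit Defensive.

(* Keep only the edges between different blocks: an independent transversal of
   the blocks is then a stable set of size r.  It is built block by block, as in
   Haxell's proof.  Given an independent transversal T of all blocks but one, r,
   grow a sequence x_1, x_2, ... in which each x_i lies in a reached block (r, or
   the block of an element of T adjacent to an earlier x), has no neighbour in T
   inside a reached block, and is not adjacent to an earlier x.  When the last x
   has no neighbour in T, it either lies in r and completes T, or it replaces the
   element t of T in its block and the sequence is cut right after the first x
   adjacent to t.  Appending an x and this exchange both lower the numbers of
   T-neighbours of the x_i in lexicographic order, so the process ends.  It cannot get stuck: otherwise every
   vertex of the s reached blocks is adjacent to T or to one of at most s - 1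
   vertices x_i, and deg v <= k, deg v + k <= |V_i| give
   |V_r| + sum_t deg t + (s - 1) k <= |V_reached| <= sum_t deg t + (s - 1) k. *)

Section NatOfDigits.
Variable B : nat.

Definition nat_of_digits (ds : seq nat) := foldl (fun a d => a * B + d) 0 ds.

Lemma foldl_digitsE a ds :
  foldl (fun a d => a * B + d) a ds = a * B ^ size ds + nat_of_digits ds.
Proof.
rewrite /nat_of_digits; elim: ds a => [|d ds IH] a /=; first by rewrite muln1 addn0.
by rewrite IH [in RHS]IH expnS; lia.
Qed.

Lemma nat_of_digits_cat ds1 ds2 :
  nat_of_digits (ds1 ++ ds2) = nat_of_digits ds1 * B ^ size ds2 + nat_of_digits ds2.
Proof. by rewrite {1}/nat_of_digits foldl_cat foldl_digitsE. Qed.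

Lemma nat_of_digits1 d : nat_of_digits [:: d] = d.
Proof. by rewrite /nat_of_digits /= mul0n. Qed.

Lemma nat_of_digits_lt ds : all (fun d => d < B) ds -> nat_of_digits ds < B ^ size ds.
Proof.
elim/last_ind: ds => [|ds d IH] //=; rewrite all_rcons => /andP [ltdB /IH ltdsB].
rewrite -cats1 nat_of_digits_cat nat_of_digits1 size_cat expnD !expn1.
have : (nat_of_digits ds).+1 * B <= B ^ size ds * B by rewrite leq_mul2r ltdsB orbT.
lia.
Qed.

Lemma nat_of_digits_lex L l (f g : nat -> nat) :
  l < L -> (forall j, j < L -> g j < B) -> (forall j, j < l -> f j = g j) ->
  g l < f l -> nat_of_digits (map g (iota 0 L)) < nat_of_digits (map f (iota 0 L)).
Proof.
move=> ltlL gB eq_fg lt_gf.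
have -> : L = l + (1 + (L - l.+1)) by lia.
rewrite !iotaD !map_cat !nat_of_digits_cat /= !add0n !nat_of_digits1.
have -> : [seq g i | i <- iota 0 l] = [seq f i | i <- iota 0 l].
  by apply/eq_in_map => j; rewrite mem_iota => /andP [_ ltjl]; rewrite eq_fg.
rewrite !size_map !size_iota ltn_add2l.
set n := L - l.+1.
have tail_lt : nat_of_digits [seq g i | i <- iota (l + 1) n] < B ^ n.
  have := @nat_of_digits_lt [seq g i | i <- iota (l + 1) n].
  rewrite size_map size_iota; apply; apply/allP => d /mapP [j].
  by rewrite mem_iota => /andP [_ ltj] ->; apply: gB; lia.
have : (g l).+1 * B ^ n <= f l * B ^ n by rewrite leq_mul2r lt_gf orbT.
rewrite mulSn => le_gf; apply: (@leq_trans (f l * B ^ n)); last exact: leq_addr.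
by apply: leq_trans le_gf; rewrite addnC ltn_add2r.
Qed.

End NatOfDigits.

Lemma card_bigcup_seq (I : Type) (U : finType) (s : seq I) (F : I -> {set U}) :
  #|\bigcup_(y <- s) F y| <= \sum_(y <- s) #|F y|.
Proof.
elim: s => [|y s IH]; first by rewrite !big_nil cards0.
by rewrite !big_cons (leq_trans (leq_card_setU _ _)) // leq_add2l.
Qed.

Section IndependentTransversal.
Variables (V I : finType) (p : V -> I) (c : rel V) (k : nat).
Hypothesis c_sym : symmetric c.
Hypothesis c_cross : forall u v, c u v -> p u != p v.

Definition block i := [set u | p u == i].

Hypothesis nbhd_le : forall v, #|nbhd c v| <= k.
Hypothesis nbhd_block : forall v, #|nbhd c v| + k <= #|block (p v)|.

Definition indep_transversal (A : {set V}) (J : {set I}) :=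
  [/\ {in A, forall a, p a \in J}, {in A &, injective p},
      {in J, forall i, exists2 a, a \in A & p a = i} &
      {in A &, forall a b, ~~ c a b}].

Definition dominated (s : seq V) := [set u | has (c^~ u) s].

Lemma c_irrefl : irreflexive c.
Proof. by move=> v; apply/negP => /c_cross; rewrite eqxx. Qed.

Lemma dominated_rcons s x : dominated (rcons s x) = dominated s :|: nbhd c x.
Proof. by apply/setP => u; rewrite !inE has_rcons orbC. Qed.

Lemma dominated_take_mono s j1 j2 :
  j1 <= j2 -> dominated (take j1 s) \subset dominated (take j2 s).
Proof.
move=> le12; apply/subsetP => u; rewrite !inE => /hasP [y y_s cyu].
by apply/hasP; exists y => //; move: y_s; rewrite -(take_takel _ le12); apply: mem_take.
Qed.

Lemma card_preimset_blocks (X : {set I}) :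
  #|[set u | p u \in X]| = \sum_(i in X) #|block i|.
Proof.
rewrite -sum1_card (partition_big p (mem X)) /=; last by move=> u; rewrite inE.
apply: eq_bigr => i iX; rewrite -sum1_card; apply: eq_bigl => u.
by rewrite !inE; case: (eqVneq (p u) i) => [->|]; rewrite ?iX ?andbT ?andbF.
Qed.

Lemma card_blocks_le_dominated (S : {set I}) (TS : {set V}) (xs : seq V) :
  (forall u, p u \in S -> (exists2 t, t \in TS & c t u) \/ u \in dominated xs) ->
  #|[set u | p u \in S]| <= \sum_(t in TS) #|nbhd c t| + size xs * k.
Proof.
move=> dom.
have sub_nbhds : [set u | p u \in S] \subset
    (\bigcup_(t in TS) nbhd c t) :|: \bigcup_(y <- xs) nbhd c y.
  apply/subsetP => u; rewrite inE => /dom [[t tTS ctu]|].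
    by apply/setUP; left; apply/bigcupP; exists t; rewrite ?inE.
  rewrite inE => /hasP [y y_xs cyu].
  by apply/setUP; right; rewrite (big_rem y y_xs) /= !inE cyu.
apply: leq_trans (subset_leq_card sub_nbhds) _.
apply: leq_trans (leq_card_setU _ _) _; apply: leq_add.
  by rewrite -big_enum (leq_trans (card_bigcup_seq _ _)) // big_enum.
apply: leq_trans (card_bigcup_seq _ _) _.
elim: (xs) => [|y s IH]; first by rewrite big_nil.
by rewrite big_cons /= mulSn leq_add.
Qed.

Lemma card_blocks_ge_transversal (S : {set I}) (TS : {set V}) r :
  r \in S -> {in TS &, injective p} -> p @: TS = S :\ r ->
  #|block r| + \sum_(t in TS) #|nbhd c t| + #|TS| * k <= #|[set u | p u \in S]|.
Proof.
move=> rS injTS imTS.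
rewrite card_preimset_blocks (bigD1 r) //= -addnA leq_add2l -sum_nat_const -big_split.
rewrite (eq_bigl (mem (p @: TS))); last by move=> i; rewrite imTS !inE andbC.
by rewrite big_imset //=; apply: leq_sum => t _; apply: nbhd_block.
Qed.

Definition reached r (T : {set V}) s := r |: p @: (T :&: dominated s).

Definition blockers (T : {set V}) x := [set t in T | c x t].

Lemma reached_take_mono r T s j1 j2 :
  j1 <= j2 -> reached r T (take j1 s) \subset reached r T (take j2 s).
Proof. by move=> le12; rewrite setUS // imsetS // setIS // dominated_take_mono. Qed.

Lemma not_dominated_nth x0 s i j y :
  i < j -> j <= size s -> y \notin dominated (take j s) -> ~~ c (nth x0 s i) y.
Proof.
move=> lt_ij le_js; apply: contra => cy; rewrite inE; apply/hasP.
by exists (nth x0 s i) => //; rewrite -(nth_take x0 lt_ij) mem_nth // size_takel.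
Qed.

Lemma indep_transversal_setU1 T J x :
  indep_transversal T (J :\ p x) -> p x \in J -> {in T, forall t, ~~ c x t} ->
  indep_transversal (x |: T) J.
Proof.
case=> TJ T_inj T_cover T_indep pxJ x_free; split.
- move=> a; rewrite in_setU1 => /orP [/eqP -> // | /TJ]; rewrite in_setD1 => /andP [_ //].
- move=> a b; rewrite !in_setU1 => /orP [/eqP -> | aT] /orP [/eqP -> | bT] //.
  + by move=> pxb; move: (TJ b bT); rewrite -pxb in_setD1 eqxx.
  + by move=> pax; move: (TJ a aT); rewrite pax in_setD1 eqxx.
  + exact: T_inj.
- move=> i iJ; case: (eqVneq i (p x)) => [-> | i_x]; first by exists x; rewrite ?setU11.
  have [t tT <-] : exists2 t, t \in T & p t = i by apply: T_cover; rewrite in_setD1 i_x.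
  by exists t; rewrite // in_setU1 tT orbT.
- move=> a b; rewrite !in_setU1 => /orP [/eqP -> | aT] /orP [/eqP -> | bT].
  + by rewrite c_irrefl.
  + exact: x_free.
  + by rewrite c_sym x_free.
  + exact: T_indep.
Qed.

Lemma indep_transversal_exchange T J x t :
  indep_transversal T J -> t \in T -> p x = p t -> {in T, forall s, ~~ c x s} ->
  indep_transversal (x |: (T :\ t)) J.
Proof.
case=> TJ T_inj T_cover T_indep tT pxt x_free; split.
- move=> a; rewrite in_setU1 in_setD1 => /orP [/eqP -> | /andP [_ /TJ] //].
  by rewrite pxt TJ.
- move=> a b; rewrite !in_setU1 !in_setD1.
  move=> /orP [/eqP -> | /andP [a_t aT]] /orP [/eqP -> | /andP [b_t bT]] //.
  + by rewrite pxt => /(T_inj _ _ tT bT) b_eq; rewrite -b_eq eqxx in b_t.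
  + by rewrite pxt => /(T_inj _ _ aT tT) a_eq; rewrite a_eq eqxx in a_t.
  + exact: T_inj.
- move=> i /T_cover [s sT <-]; case: (eqVneq s t) => [-> | s_t].
    by exists x; rewrite ?setU11.
  by exists s; rewrite // in_setU1 in_setD1 s_t sT orbT.
- move=> a b; rewrite !in_setU1 !in_setD1.
  move=> /orP [/eqP -> | /andP [_ aT]] /orP [/eqP -> | /andP [_ bT]].
  + by rewrite c_irrefl.
  + exact: x_free.
  + by rewrite c_sym x_free.
  + exact: T_indep.
Qed.

Lemma reached_exchange r T s x t :
  x \notin dominated s -> t \notin dominated s ->
  reached r (x |: (T :\ t)) s = reached r T s.
Proof.
move=> x_new t_new; rewrite /reached.
have -> // : (x |: (T :\ t)) :&: dominated s = T :&: dominated s.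
apply/setP => u; rewrite !in_setI in_setU1 in_setD1.
case: (eqVneq u x) => [-> | _] /=; first by rewrite (negbTE x_new) andbF.
by case: (eqVneq u t) => [-> | _] //=; rewrite (negbTE t_new) !andbF.
Qed.

Lemma blockers_exchange T x t y :
  ~~ c y x -> blockers (x |: (T :\ t)) y = blockers T y :\ t.
Proof.
move=> ycx; apply/setP => u; rewrite !inE.
case: (eqVneq u x) => [-> | _] /=; first by rewrite (negbTE ycx) !andbF.
by case: (eqVneq u t).
Qed.

Section AlternatingSequence.
Variables (J : {set I}) (r : I) (x0 : V).
Hypothesis rJ : r \in J.
Hypothesis blocks_nonempty : {in J, forall i, exists v, p v = i}.

Definition admissible T xs :=
  indep_transversal T (J :\ r) /\ forall j, j < size xs ->
  [/\ p (nth x0 xs j) \in reached r T (take j xs),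
      {in T, forall t, p t \in reached r T (take j xs) -> ~~ c t (nth x0 xs j)},
      nth x0 xs j \notin dominated (take j xs) &
      j.+1 < size xs -> blockers T (nth x0 xs j) != set0].

(* The potential orders the sequences lexicographically by the numbers of
   blockers of their entries; a missing entry counts as #|V| + 1, so appending
   an entry lowers the potential. *)
Definition blocker_count T xs j :=
  if j < size xs then #|blockers T (nth x0 xs j)| else #|V|.+1.

Definition potential T xs :=
  nat_of_digits #|V|.+2 (map (blocker_count T xs) (iota 0 #|J|)).

Lemma blocker_count_lt T xs j : blocker_count T xs j < #|V|.+2.
Proof.
by rewrite /blocker_count; case: ifP => // _; rewrite ltnS (leq_trans (max_card _)).
Qed.

Lemma reached_sub T s : indep_transversal T (J :\ r) -> reached r T s \subset J.
Proof.
case=> TJ _ _ _; apply/subsetP => i; rewrite !inE => /orP [/eqP -> //|/imsetP [t]].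
by rewrite inE => /andP [/TJ + _] ->; rewrite inE => /andP [].
Qed.

Lemma imset_transversal_reached T s : indep_transversal T (J :\ r) ->
  p @: [set t in T | p t \in reached r T s] = reached r T s :\ r.
Proof.
move=> T_it; have [TJ _ T_cover _] := T_it; set S := reached r T s.
apply/eqP; rewrite eqEsubset; apply/andP; split; apply/subsetP => i.
  case/imsetP => t; rewrite inE => /andP [tT tS] ->.
  by rewrite in_setD1 tS andbT; have := TJ t tT; rewrite in_setD1 => /andP [].
rewrite in_setD1 => /andP [i_r iS].
have iJr : i \in J :\ r by rewrite in_setD1 i_r (subsetP (reached_sub s T_it)).
have [t tT pt] := T_cover i iJr.
by rewrite -pt imset_f // in_set tT pt iS.
Qed.

Lemma card_reached_gt T xs j : admissible T xs -> j <= size xs ->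
  (forall i, i < j -> blockers T (nth x0 xs i) != set0) ->
  j < #|reached r T (take j xs)|.
Proof.
move=> [_ adm]; elim: j => [|j IH] le_j_xs blocked.
  by rewrite take0; apply/card_gt0P; exists r; rewrite !inE eqxx.
apply: leq_ltn_trans (IH (ltnW le_j_xs) (fun i lt_ij => blocked i (ltnW lt_ij))) _.
apply: proper_card; apply/properP; split; first exact: reached_take_mono.
have /set0Pn [t] := blocked j (ltnSn j); rewrite inE => /andP [tT cxt].
exists (p t).
  rewrite !inE; apply/orP; right; apply/imsetP; exists t => //.
  by rewrite inE tT (take_nth x0 le_j_xs) dominated_rcons !inE cxt orbT.
apply/negP => reached_t; have [_ nadj _ _] := adm j le_j_xs.
by move: (nadj t tT reached_t); rewrite c_sym cxt.
Qed.

Lemma admissible_size T xs : admissible T xs -> size xs <= #|J|.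
Proof.
move=> adm; case: (posnP (size xs)) => [-> // | pos_xs].
have lt_last : (size xs).-1 < size xs by rewrite prednK.
have := card_reached_gt adm (ltnW lt_last).
have blocked i : i < (size xs).-1 -> blockers T (nth x0 xs i) != set0.
  by move=> lt_i; have [_ _ _] := adm.2 i (ltn_trans lt_i lt_last); apply; lia.
move=> /(_ blocked) /leq_trans /(_ (subset_leq_card (reached_sub _ adm.1))); lia.
Qed.

Section Extension.
Variables (T : {set V}) (xs : seq V) (u : V).
Hypothesis adm : admissible T xs.
Hypothesis blocked : forall i, i < size xs -> blockers T (nth x0 xs i) != set0.
Hypothesis u_reached : p u \in reached r T xs.
Hypothesis u_free : {in T, forall t, p t \in reached r T xs -> ~~ c t u}.
Hypothesis u_new : u \notin dominated xs.

Lemma admissible_rcons : admissible T (rcons xs u).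
Proof.
have [T_it adm_xs] := adm; split => // j; rewrite size_rcons ltnS => le_j_xs.
rewrite nth_rcons -cats1 takel_cat //; case: ltnP => [lt_j_xs | ge_j_xs].
  by have [? ? ? _] := adm_xs j lt_j_xs; split => // _; apply: blocked.
have -> : j = size xs by lia.
by rewrite eqxx take_size ltnn.
Qed.

Lemma potential_rcons : potential T (rcons xs u) < potential T xs.
Proof.
have lt_xs_J : size xs < #|J|.
  apply: leq_trans (card_reached_gt adm (leqnn _) blocked) _.
  by rewrite take_size subset_leq_card // reached_sub //; case: adm.
apply: (nat_of_digits_lex lt_xs_J) => [j _|j lt_j|]; first exact: blocker_count_lt.
  by rewrite /blocker_count size_rcons ltnS (ltnW lt_j) lt_j nth_rcons lt_j.
rewrite /blocker_count size_rcons ltnSn ltnn nth_rcons ltnn eqxx ltnS.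
exact: max_card.
Qed.

End Extension.

Lemma admissible_extendable T xs : admissible T xs ->
  (forall i, i < size xs -> blockers T (nth x0 xs i) != set0) ->
  exists u, [/\ p u \in reached r T xs,
                {in T, forall t, p t \in reached r T xs -> ~~ c t u} &
                u \notin dominated xs].
Proof.
move=> adm blocked; have [[_ T_inj _ _] _] := adm.
set S := reached r T xs; set TS := [set t in T | p t \in S].
have rS : r \in S by rewrite !inE eqxx.
have imTS : p @: TS = S :\ r := imset_transversal_reached xs adm.1.
have TS_inj : {in TS &, injective p}.
  by move=> a b; rewrite !inE => /andP [aT _] /andP [bT _]; apply: T_inj.
have card_TS : #|TS| = #|S| - 1.
  by rewrite -(card_in_imset TS_inj) imTS (cardsD1 r S) rS; lia.
have lt_xs_S : size xs < #|S|.
  by have := card_reached_gt adm (leqnn _) blocked; rewrite take_size.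
have [v pv] := blocks_nonempty rJ.
have block_r_pos : 0 < #|block r| by apply/card_gt0P; exists v; rewrite inE pv.
have [/existsP [u /and3P [uS /forall_inP u_free u_new]] | /existsPn stuck] :=
  boolP [exists u, [&& p u \in S, [forall t in T, (p t \in S) ==> ~~ c t u]
                     & u \notin dominated xs]].
  by exists u; split => // t tT; apply/implyP/u_free.
exfalso.
have dom w : p w \in S -> (exists2 t, t \in TS & c t w) \/ w \in dominated xs.
  move=> wS; move: (stuck w); rewrite wS /= negb_and negbK.
  case/orP => [/forall_inPn [t tT] | ->]; last by right.
  by rewrite negb_imply negbK => /andP [tS ctw]; left; exists t; rewrite // in_set tT tS.
have := card_blocks_le_dominated dom; have := card_blocks_ge_transversal rS TS_inj imTS.
have : size xs * k <= #|TS| * k by rewrite leq_mul2r card_TS; lia.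
lia.
Qed.

Section Exchange.
Variables (T : {set V}) (xs : seq V) (l j : nat) (t : V).
Let x := nth x0 xs j.
Hypothesis adm : admissible T xs.
Hypotheses (lt_lj : l < j) (lt_j_xs : j < size xs).
Hypotheses (tT : t \in T) (pxt : p x = p t).
Hypothesis x_free : {in T, forall s, ~~ c x s}.
Hypothesis t_new : t \notin dominated (take l xs).
Hypothesis first_t : c (nth x0 xs l) t.

Lemma swapped_in_undominated i : i <= j -> x \notin dominated (take i xs).
Proof.
have [_ _ x_new _] := adm.2 j lt_j_xs.
by move=> le_ij; apply: contra x_new; apply/subsetP/dominated_take_mono.
Qed.

Lemma swapped_out_undominated i : i <= l -> t \notin dominated (take i xs).
Proof. by move=> le_il; apply: contra t_new; apply/subsetP/dominated_take_mono. Qed.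

Lemma nonadjacent_swapped_in i : i < j -> ~~ c (nth x0 xs i) x.
Proof.
move=> lt_ij.
exact: not_dominated_nth lt_ij (ltnW lt_j_xs) (swapped_in_undominated (leqnn j)).
Qed.

Lemma blockers_exchange_before i : i < l ->
  blockers (x |: (T :\ t)) (nth x0 xs i) = blockers T (nth x0 xs i).
Proof.
move=> lt_il; have le_l_xs : l <= size xs by lia.
rewrite blockers_exchange; last by apply: nonadjacent_swapped_in; lia.
apply/setP => u; rewrite !inE; case: (eqVneq u t) => [-> | //].
by rewrite (negbTE (not_dominated_nth x0 lt_il le_l_xs t_new)) andbF.
Qed.

Lemma swapped_block_unreached i : i <= l -> p t \notin reached r T (take i xs).
Proof.
have [[TJ T_inj _ _] _] := adm.
move=> le_il; rewrite in_setU1 negb_or; apply/andP; split.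
  by apply: contraTneq (TJ t tT) => ->; rewrite in_setD1 eqxx.
apply/imsetP => -[s]; rewrite in_setI => /andP [sT s_dom] /(T_inj _ _ tT sT) eq_ts.
by move: (swapped_out_undominated le_il); rewrite eq_ts s_dom.
Qed.

Lemma admissible_exchange : admissible (x |: (T :\ t)) (take l.+1 xs).
Proof.
have [T_it adm_xs] := adm.
split; first exact: indep_transversal_exchange.
have le_l1_xs : l.+1 <= size xs by lia.
move=> i; rewrite size_takel // ltnS => le_il.
have lt_i_xs : i < size xs by lia.
rewrite nth_take ?ltnS // take_takel; last by lia.
rewrite reached_exchange ?swapped_out_undominated ?swapped_in_undominated //; last by lia.
have [i_reached i_free i_new i_blocked] := adm_xs i lt_i_xs.
split => //.
- move=> s; rewrite in_setU1 in_setD1 => /orP [/eqP -> | /andP [_ sT]]; last exact: i_free.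
  by rewrite pxt (negbTE (swapped_block_unreached le_il)).
- by move=> lt_i1; rewrite blockers_exchange_before //; apply: i_blocked; lia.
Qed.

Lemma potential_exchange : potential (x |: (T :\ t)) (take l.+1 xs) < potential T xs.
Proof.
have le_l1_xs : l.+1 <= size xs by lia.
have lt_lJ : l < #|J| by have := admissible_size adm; lia.
apply: (nat_of_digits_lex lt_lJ) => [i _ | i lt_il |]; first exact: blocker_count_lt.
  rewrite /blocker_count size_takel // nth_take; last by lia.
  by rewrite blockers_exchange_before // !ifT //; lia.
rewrite /blocker_count size_takel // ltnSn nth_take // ifT; last by lia.
rewrite blockers_exchange; last by apply: nonadjacent_swapped_in; lia.
by rewrite (cardsD1 t (blockers T _)) inE tT first_t.
Qed.

End Exchange.

Lemma admissible_last_free T xs : admissible T xs -> 0 < size xs ->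
  blockers T (nth x0 xs (size xs).-1) = set0 ->
  (exists A, indep_transversal A J) \/
  exists T' xs', admissible T' xs' /\ potential T' xs' < potential T xs.
Proof.
move=> adm pos_xs free_last; set j := (size xs).-1; set x := nth x0 xs j.
have lt_j_xs : j < size xs by rewrite ltn_predL.
have x_free : {in T, forall s, ~~ c x s}.
  move=> s sT; apply/negP => cxs.
  by have := in_set0 s; rewrite -free_last inE sT cxs.
have [T_it adm_xs] := adm; have [x_reached _ _ _] := adm_xs j lt_j_xs.
move: x_reached; rewrite in_setU1 => /orP [/eqP pxr | /imsetP [t]].
  by left; exists (x |: T); apply: indep_transversal_setU1; rewrite ?pxr.
rewrite in_setI => /andP [tT t_dom] pxt; right.
set l := find (c^~ t) xs.
have lt_lj : l < j by apply: find_ltn; move: t_dom; rewrite inE.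
have first_t : c (nth x0 xs l) t.
  apply: (nth_find x0 (a := c^~ t)); move: t_dom; rewrite inE.
  by case/hasP => y /mem_take y_xs cyt; apply/hasP; exists y.
have t_new : t \notin dominated (take l xs).
  by rewrite inE; apply/negP => /find_ltn; rewrite ltnn.
exists (x |: (T :\ t)), (take l.+1 xs).
by split; [apply: admissible_exchange | apply: potential_exchange].
Qed.

Lemma admissible_transversal T xs : admissible T xs -> exists A, indep_transversal A J.
Proof.
have [n] := ubnP (potential T xs); elim: n T xs => // n IH T xs lt_pot adm.
have descend T' xs' : admissible T' xs' -> potential T' xs' < potential T xs ->
    exists A, indep_transversal A J.
  by move=> adm' lt_pot'; apply: (IH T' xs') => //; apply: leq_trans lt_pot' _.
have [/andP [pos_xs /eqP free_last] | not_free] :=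
  boolP ((0 < size xs) && (blockers T (nth x0 xs (size xs).-1) == set0)).
  case: (admissible_last_free adm pos_xs free_last) => // [[T' [xs' []]]].
  exact: descend.
have blocked i : i < size xs -> blockers T (nth x0 xs i) != set0.
  move=> lt_i; case: (ltnP i.+1 (size xs)) => [lt_i1 | ge_i1].
    by have [_ _ _] := adm.2 i lt_i; apply.
  have last_i : i = (size xs).-1 by lia.
  by move: not_free; rewrite -last_i (leq_ltn_trans (leq0n i) lt_i).
have [u [u_reached u_free u_new]] := admissible_extendable adm blocked.
by apply: (descend T (rcons xs u)); [apply: admissible_rcons | apply: potential_rcons].
Qed.

End AlternatingSequence.

Lemma indep_transversal_exists (J : {set I}) :
  {in J, forall i, exists v, p v = i} -> exists A, indep_transversal A J.
Proof.
have [n] := ubnP #|J|; elim: n J => // n IH J lt_J_n J_nonempty.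
have [-> | [r rJ]] := set_0Vmem J; first by exists set0; split => a; rewrite inE.
have [T T_it] : exists T, indep_transversal T (J :\ r).
  apply: IH => [|i /setD1P [_ /J_nonempty] //].
  by move: lt_J_n; rewrite (cardsD1 r J) rJ.
have [x0 _] := J_nonempty r rJ.
by apply: (@admissible_transversal J r x0 rJ J_nonempty T [::]); split.
Qed.

End IndependentTransversal.

Definition cross_edge (T : finType) (e : rel T) (P : {set {set T}}) : rel T :=
  fun u v => e u v && (pblock P u != pblock P v).

Section Partition.
Variables (T : finType) (e : rel T) (P : {set {set T}}).
Hypothesis P_part : partition P [set: T].

Let P_cover v : v \in cover P.
Proof. by case/and3P: P_part => /eqP ->; rewrite inE. Qed.

Lemma pblock_in v : pblock P v \in P.
Proof. exact: pblock_mem. Qed.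

Lemma mem_pblock_in v : v \in pblock P v.
Proof. by rewrite mem_pblock. Qed.

Lemma block_pblock v : block (pblock P) (pblock P v) = pblock P v.
Proof.
case/and3P: P_part => _ P_triv _.
by apply/setP => u; rewrite inE eq_sym (eq_pblock u P_triv (P_cover v)).
Qed.

Lemma nbhd_cross_edge v : nbhd (cross_edge e P) v = nbhd e v :\: pblock P v.
Proof.
case/and3P: P_part => _ P_triv _.
by apply/setP => u; rewrite !inE -(eq_pblock u P_triv (P_cover v)) andbC.
Qed.

Lemma pblock_onto : {in P, forall B, exists v, pblock P v = B}.
Proof.
case/and3P: P_part => _ P_triv P_nonempty B BP.
have /set0Pn [v vB] : B != set0 by apply: contraNneq P_nonempty => <-.
by exists v; apply: def_pblock.
Qed.

Lemma stable_indep_transversal A : irreflexive e ->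
  indep_transversal (pblock P) (cross_edge e P) A P -> is_stable e A /\ #|A| = #|P|.
Proof.
move=> e_irr [AP A_inj A_cover A_indep]; split.
  move=> a b aA bA; case: (eqVneq a b) => [-> | a_b]; first by rewrite e_irr.
  move: (A_indep a b aA bA); rewrite negb_and negbK => /orP [// | /eqP pab].
  by rewrite (A_inj _ _ aA bA pab) eqxx in a_b.
have -> : P = pblock P @: A.
  apply/setP => B; apply/idP/imsetP => [/A_cover [a aA <-] | [a aA ->]]; last exact: AP.
  by exists a.
by rewrite card_in_imset.
Qed.

End Partition.

Theorem theorem4 (T : finType) (e : rel T) (k : nat) (P : {set {set T}}) :
  simple_graph e ->
  0 < k ->
  partition P [set: T] ->
  (forall V, V \in P -> is_clique e V) ->
  (forall V, V \in P -> forall v, v \in V ->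
     (#|nbhd e v :\: V| <= k /\ #|nbhd e v :\: V| + k <= #|V|)) ->
  exists S : {set T}, is_stable e S /\ #|S| = #|P|.
Proof.
(* A transversal meets each block once. *)
move=> [e_sym e_irr] _ P_part _ deg.
have cross_sym : symmetric (cross_edge e P).
  by move=> u v; rewrite /cross_edge e_sym eq_sym.
have cross_blocks u v : cross_edge e P u v -> pblock P u != pblock P v by case/andP.
have deg_v v := deg _ (pblock_in P_part v) v (mem_pblock_in P_part v).
have deg_le v : #|nbhd (cross_edge e P) v| <= k.
  by rewrite nbhd_cross_edge //; case: (deg_v v).
have deg_block v : #|nbhd (cross_edge e P) v| + k <= #|block (pblock P) (pblock P v)|.
  by rewrite nbhd_cross_edge // block_pblock //; case: (deg_v v).
have [A A_it] := indep_transversal_exists cross_sym cross_blocks deg_le deg_block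
                   (pblock_onto P_part).
by exists A; apply: stable_indep_transversal.
Qed.
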